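(* Let $p$ be a prime, $q=p^r$, $\mathscr{C}\subseteq\mathbb{F}_q^n$ a linear code over $\mathbb{F}_q$ of dimension $k$ ($1\le k<n$), $m\ge2$, $\mathscr{D}=\{(\lambda,\ldots,\lambda):\lambda\in\mathbb{F}_{q^k}\}\subset\mathbb{F}_{q^k}^m$, $\kappa:\mathbb{F}_{q^k}\to\mathcal{L}(\mathscr{C},\mathbb{F}_p)$ an $\mathbb{F}_p$-linear isomorphism, $f_\lambda=\kappa(\lambda)$, and $Q=\operatorname{span}\{\Phi_\Lambda:\Lambda\in\mathscr{D}\}$. Then $$Q=\operatorname{span}\Big\{\sum_{\substack{(\mathbf{c}_1,\ldots,\mathbf{c}_m)\in\mathscr{C}^m\\ \mathbf{c}_1+\cdots+\mathbf{c}_m=\mathbf{c}}}|\mathbf{c}_1\ldots\mathbf{c}_m\rangle:\mathbf{c}\in\mathscr{C}\Big\}.$$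
   Context: $\zeta=e^{2\pi i/p}$; $\mathcal{L}(\mathscr{C},\mathbb{F}_p)$ is the space of $\mathbb{F}_p$-linear maps $\mathscr{C}\to\mathbb{F}_p$, with $\mathbb{F}_{q^k}$ viewed as an $\mathbb{F}_p$-space. $\phi_\lambda=q^{-k/2}\sum_{\mathbf{c}\in\mathscr{C}}\zeta^{f_\lambda(\mathbf{c})}|\mathbf{c}\rangle\in(\mathbb{C}^q)^{\otimes n}$, $\Phi_\Lambda=\phi_{\lambda_1}\otimes\cdots\otimes\phi_{\lambda_m}$; $(\mathbb{C}^q)^{\otimes nm}$ has orthonormal basis $|\mathbf{c}_1\ldots\mathbf{c}_m\rangle=|\mathbf{c}_1\rangle\otimes\cdots\otimes|\mathbf{c}_m\rangle$. *)

From HB Require Import structures.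
From mathcomp Require Import all_boot all_order all_algebra all_field.
From mathcomp Require Import complex.
From mathcomp Require Import reals trigo.
Set Implicit Arguments. Unset Strict Implicit. Unset Printing Implicit Defensive.
Import GRing.Theory Num.Theory.
Local Open Scope ring_scope.

Definition zeta (R : realType) (p : nat) : R[i] :=
  Complex (cos (2 * pi / p%:R)) (sin (2 * pi / p%:R)).

(* f : F_q^n -> F_p is F_p-linear on the code C.  The F_p-vector-space structure
   on F_q^n (char F_q = p) is  a . x = x *+ a  (a viewed as a natural < p). *)
Definition Fp_linear_on (p : nat) (F : finFieldType) (n : nat)
    (C : {vspace 'rV[F]_n}) (f : 'rV[F]_n -> 'F_p) : Prop :=
  forall (a : 'F_p) (x y : 'rV[F]_n), x \in C -> y \in C ->
    f (x *+ val a + y) = a * f x + f y.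

(* kappa : K -> L(C, F_p) is an F_p-linear isomorphism.  Elements of L(C,F_p)
   are represented by functions on F_q^n, identified when they agree on C. *)
Definition Fp_iso_to_dual (p : nat) (F : finFieldType) (n : nat)
    (C : {vspace 'rV[F]_n}) (K : finFieldType) (kappa : K -> 'rV[F]_n -> 'F_p)
    : Prop :=
  [/\ (forall lam, Fp_linear_on C (kappa lam)),
      (forall (a : 'F_p) (lam mu : K) (c : 'rV[F]_n), c \in C ->
          kappa (lam *+ val a + mu) c = a * kappa lam c + kappa mu c),
      (forall lam mu : K, {in C, kappa lam =1 kappa mu} -> lam = mu)
    & (forall f : 'rV[F]_n -> 'F_p, Fp_linear_on C f ->
          exists lam : K, {in C, kappa lam =1 f})].

(* Vectors of (C^q)^{(x) n} are functions F_q^n -> C (|c> = indicator of c);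
   vectors of (C^q)^{(x) nm} are functions (F_q^n)^m -> C, where a point
   (c_1,...,c_m) is represented by cs : {ffun 'I_m -> 'rV[F]_n}. *)
Definition ket_space (R : realType) (F : finFieldType) (n m : nat) :=
  {ffun {ffun 'I_m -> 'rV[F]_n} -> (R[i])^o}.

Definition phi (R : realType) (p : nat) (F : finFieldType) (n : nat)
    (C : {vspace 'rV[F]_n}) (f : 'rV[F]_n -> 'F_p) : 'rV[F]_n -> R[i] :=
  fun x => if x \in C then
     Complex ((Num.sqrt ((#|F| ^ \dim C)%:R : R))^-1) 0 * zeta R p ^+ val (f x)
   else 0.

Definition Phi (R : realType) (p : nat) (F : finFieldType) (n m : nat)
    (C : {vspace 'rV[F]_n}) (K : finFieldType) (kappa : K -> 'rV[F]_n -> 'F_p)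
    (Lam : {ffun 'I_m -> K}) : ket_space R F n m :=
  [ffun cs : {ffun 'I_m -> 'rV[F]_n} => \prod_(i < m) phi R C (kappa (Lam i)) (cs i)].

Definition diagD (K : finFieldType) (m : nat) : {set {ffun 'I_m -> K}} :=
  [set [ffun _ => lam] | lam : K].

Definition sumket (R : realType) (F : finFieldType) (n m : nat)
    (C : {vspace 'rV[F]_n}) (c : 'rV[F]_n) : ket_space R F n m :=
  [ffun cs : {ffun 'I_m -> 'rV[F]_n} => if [forall i, cs i \in C] && (\sum_(i < m) cs i == c)
              then 1 else 0].

Definition code_elems (F : finFieldType) (n : nat) (C : {vspace 'rV[F]_n})
  : seq 'rV[F]_n := enum [set c : 'rV[F]_n | c \in C].


(* For a diagonal Lambda = (lambda, ..., lambda), linearity of f_lambda turns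
   the product of the zeta^(f_lambda(c_i)) into zeta^(f_lambda(c_1 + ... + c_m)),
   so Phi_Lambda is, up to the factor q^(-km/2), the combination
   sum_(c in C) zeta^(f_lambda(c)) S_c, where S_c is the sum of the kets
   |c_1 ... c_m> with c_1 + ... + c_m = c.  Conversely, the characters
   lambda |-> zeta^(f_lambda(d)) satisfy the orthogonality relation
   sum_lambda zeta^(f_lambda(d)) = q^k [d = 0] on C, so
   sum_lambda zeta^(-f_lambda(c)) Phi_lambda is a nonzero multiple of S_c.
   The orthogonality relation needs the f_lambda to separate the points of C;
   this follows by double counting, since kappa is injective and |K| = |C|. *)

From HB Require Import structures.
From mathcomp Require Import all_boot all_order all_algebra all_field.
From mathcomp Require Import complex.
From mathcomp Require Import reals trigo.
From mathcomp Require Import ring.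
Set Implicit Arguments.
Unset Strict Implicit.
Unset Printing Implicit Defensive.

Import Order.POrderTheory GRing.Theory Num.Theory.
Local Open Scope ring_scope.

Section RootOfUnity.
Variables (R : realType) (p : nat).
Hypothesis p_prime : prime p.

Lemma zeta_expr j :
  zeta R p ^+ j = Complex (cos (j%:R * (2 * pi / p%:R))) (sin (j%:R * (2 * pi / p%:R))).
Proof.
elim: j => [|j IHj]; first by rewrite expr0 !mul0r cos0 sin0.
set th := 2 * pi / p%:R in IHj *.
by rewrite exprSr IHj /zeta -/th -addn1 natrD mulrDl mul1r cosD sinD /=; congr Complex; ring.
Qed.

Lemma zeta_neq1 : zeta R p != 1.
Proof.
rewrite /zeta; set th := 2 * pi / p%:R.
have p_gt0 : (0 : R) < p%:R by rewrite ltr0n prime_gt0.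
have th_gt0 : 0 < th by rewrite divr_gt0 ?mulr_gt0 ?pi_gt0.
have th_le_pi : th <= pi by rewrite ler_pdivrMr // mulrC ler_pM2l ?pi_gt0 // ler_nat prime_gt1.
apply/eqP => -[cos_th _].
have /cos_inj : cos th = cos 0 by rewrite cos_th cos0.
rewrite !in_itv /= (ltW th_gt0) th_le_pi lexx pi_ge0 => /(_ isT isT) th0.
by move: th_gt0; rewrite th0 ltxx.
Qed.

Lemma zeta_prim_root : p.-primitive_root (zeta R p).
Proof.
have zeta_p : zeta R p ^+ p = 1.
  rewrite zeta_expr.
  have -> : p%:R * (2 * pi / p%:R) = pi *+ 2 :> R.
    by rewrite mulr2n; field; rewrite pnatr_eq0 -lt0n prime_gt0.
  by rewrite cos2pi sin2pi.
have [d prim_d d_dvd_p] := prim_order_exists (prime_gt0 p_prime) zeta_p.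
have [d1|dp] : d = 1%N \/ d = p.
  by case/primeP: p_prime => _ /(_ d d_dvd_p) /orP[] /eqP; [left|right].
- by move: prim_d zeta_neq1; rewrite d1 => /prim_expr_order; rewrite expr1 => ->; rewrite eqxx.
- by move: prim_d; rewrite dp.
Qed.

Definition Fp_char (a : 'F_p) : R[i] := zeta R p ^+ val a.

Lemma Fp_char0 : Fp_char 0 = 1.
Proof. exact: expr0. Qed.

Lemma Fp_charD : {morph Fp_char : a b / a + b >-> a * b}.
Proof.
have expr_mod_p j : zeta R p ^+ (j %% (Zp_trunc (pdiv p)).+2) = zeta R p ^+ j.
  by rewrite (Fp_cast p_prime) (prim_expr_mod zeta_prim_root).
by move=> a b; rewrite /Fp_char -exprD; apply: expr_mod_p.
Qed.

Lemma Fp_char_eq1 a : (Fp_char a == 1) = (a == 0).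
Proof.
have a_lt_p : (val a < p)%N by apply: leq_trans (ltn_ord a) _; rewrite (Fp_cast p_prime).
by rewrite /Fp_char -(prim_order_dvd zeta_prim_root) /dvdn modn_small.
Qed.

End RootOfUnity.

Arguments Fp_charD {R p}.
Arguments Fp_char_eq1 {R p}.

Lemma sum_char_zmod_closed (V : finZmodType) (L : idomainType) (A : {pred V})
    (chi : V -> L) :
  zmod_closed A -> {in A &, {morph chi : x y / x + y >-> x * y}} ->
  \sum_(x in A) chi x = if [forall x in A, chi x == 1] then #|A|%:R else 0.
Proof.
move=> [A0 AB] chiD.
have AD x y : x \in A -> y \in A -> x + y \in A.
  by move=> Ax Ay; rewrite -[y]opprK -[- y]sub0r AB ?AB.
case: ifPn => [/forall_inP chi1 | /forall_inPn [x0 Ax0 chi_x0]].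
  by rewrite (eq_bigr (fun=> 1)) ?sumr_const // => x /chi1/eqP.
have A_shift x : (x + x0 \in A) = (x \in A).
  by apply/idP/idP => [Axx0 | Ax]; [rewrite -(addrK x0 x) AB | apply: AD].
have shift : \sum_(x in A) chi x = chi x0 * \sum_(x in A) chi x.
  rewrite mulr_sumr {1}(reindex_inj (addIr x0)) /=.
  by apply: eq_big => [x | x]; rewrite A_shift // => Ax; rewrite chiD // mulrC.
apply/eqP; have : (1 - chi x0) * \sum_(x in A) chi x == 0.
  by rewrite mulrBl mul1r -shift subrr.
by rewrite mulf_eq0 subr_eq0 eq_sym (negbTE chi_x0).
Qed.

Lemma mem_code_elems (F : finFieldType) (n : nat) (C : {vspace 'rV[F]_n}) c :
  (c \in code_elems C) = (c \in C).
Proof. by rewrite mem_enum inE. Qed.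

Section CodeStates.
Variables (R : realType) (p : nat) (F : finFieldType) (n m : nat)
  (C : {vspace 'rV[F]_n}) (K : finFieldType) (kappa : K -> 'rV[F]_n -> 'F_p).
Hypotheses (p_prime : prime p) (kappa_iso : Fp_iso_to_dual C kappa).

Local Notation e := (@Fp_char R p).

Lemma kappaD l : {in C &, {morph kappa l : x y / x + y}}.
Proof.
case: kappa_iso => kappa_lin _ _ _ x y Cx Cy.
by have := kappa_lin l 1 x y Cx Cy; rewrite mul1r.
Qed.

Lemma kappa0 l : kappa l 0 = 0.
Proof. by apply: (addIr (kappa l 0)); rewrite -kappaD ?mem0v // !add0r. Qed.

Lemma kappaB l : {in C &, {morph kappa l : x y / x - y}}.
Proof.
move=> x y Cx Cy /=; apply: (addIr (kappa l y)).
by rewrite -kappaD ?memvB // !subrK.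
Qed.

Lemma kappa_sum l (I : finType) (cs : I -> 'rV[F]_n) : (forall i, cs i \in C) ->
  kappa l (\sum_i cs i) = \sum_i kappa l (cs i).
Proof.
move=> Ccs; apply: (big_morph_in (C : {pred _}) (kappa l) (@memvD _ _ C) (mem0v C)).
- exact: kappaD.
- exact: kappa0.
- by move=> i _; apply: Ccs.
Qed.

Lemma kappaDl l mu c : c \in C -> kappa (l + mu) c = kappa l c + kappa mu c.
Proof.
case: kappa_iso => _ kappa_lin _ _ Cc.
by have := kappa_lin 1 l mu c Cc; rewrite mul1r.
Qed.

Lemma kappa0l c : c \in C -> kappa 0 c = 0.
Proof. by move=> Cc; apply: (addIr (kappa 0 c)); rewrite -kappaDl // !add0r. Qed.

Lemma kappa_eq0 l : {in C, forall c, kappa l c = 0} -> l = 0.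
Proof.
case: kappa_iso => _ _ kappa_inj _ kappa_l0.
by apply: kappa_inj => c Cc; rewrite kappa_l0 ?kappa0l.
Qed.

Lemma sum_char_code l : \sum_(c in C) e (kappa l c) = if l == 0 then #|C|%:R else 0.
Proof.
rewrite sum_char_zmod_closed; last 2 first.
- exact/GRing.submod_closedB/memv_submod_closed.
- by move=> x y Cx Cy /=; rewrite kappaD // (Fp_charD p_prime).
congr (if _ then _ else _); apply/forall_inP/eqP => [kappa_l1 | -> c Cc].
- by apply: kappa_eq0 => c /kappa_l1; rewrite (Fp_char_eq1 p_prime) => /eqP.
- by rewrite kappa0l // Fp_char0.
Qed.

Lemma sum_char_kappa d : d \in C ->
  \sum_(l : K) e (kappa l d) = if [forall l, kappa l d == 0] then #|K|%:R else 0.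
Proof.
move=> Cd; rewrite (eq_bigl (fun l => l \in predT)) // sum_char_zmod_closed; last 2 first.
- by split=> // x y.
- by move=> l mu _ _ /=; rewrite kappaDl // (Fp_charD p_prime).
congr (if _ then _ else _); apply: eq_forallb => l.
by rewrite (Fp_char_eq1 p_prime).
Qed.

Hypothesis card_K : #|K| = #|C|.

Lemma kappa_separates d : d \in C -> [forall l, kappa l d == 0] = (d == 0).
Proof.
move=> Cd; apply/idP/eqP => [kappa_d0 | ->]; last by apply/forallP => l; rewrite kappa0.
pose Z := [set c | (c \in C) && [forall l, kappa l c == 0]].
have Z0 : 0 \in Z by rewrite inE mem0v; apply/forallP => l; rewrite kappa0.
have double_count : #|K|%:R *+ #|Z| = #|C|%:R :> R[i].
  transitivity (\sum_(c in C) \sum_(l : K) e (kappa l c)).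
    rewrite (eq_bigr _ sum_char_kappa) -big_mkcondr /= -sumr_const.
    by apply: eq_bigl => c; rewrite inE.
  rewrite exchange_big /= (eq_bigr _ (fun l _ => sum_char_code l)).
  by rewrite -big_mkcond big_pred1_eq.
have /cards1P [z Zz] : #|Z| == 1%N.
  have C_gt0 : (0 < #|C|)%N by apply/card_gt0P; exists 0; apply: mem0v.
  move/eqP: double_count; rewrite -mulrnA card_K eqr_nat.
  by rewrite -[X in _ == X]muln1 eqn_pmul2l.
have : d \in Z by rewrite inE Cd.
by move: Z0; rewrite Zz !inE => /eqP <- /eqP.
Qed.

Local Notation S := (@sumket R F n m C).
Local Notation Phi_diag l := (@Phi R p F n m C K kappa [ffun=> l]).

Definition phi_scale : R[i] := Complex ((Num.sqrt ((#|F| ^ \dim C)%:R : R))^-1) 0.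

Lemma phi_scale_neq0 : phi_scale != 0.
Proof.
have F_gt0 : (0 < #|F|)%N by apply/card_gt0P; exists 0.
apply/eqP => /(congr1 (@complex.Re R)) /= /eqP.
by rewrite invr_eq0 sqrtr_eq0 lern0 expn_eq0 eqn0Ngt F_gt0.
Qed.

Lemma Phi_diag_ffunE l cs : Phi_diag l cs =
  if [forall i, cs i \in C] then phi_scale ^+ m * e (kappa l (\sum_(i < m) cs i)) else 0.
Proof.
rewrite ffunE; case: forallP => [Ccs | /forallP/forallPn [i Ccs_i]]; last first.
  by rewrite (bigD1 i) //= ffunE /phi (negbTE Ccs_i) mul0r.
rewrite kappa_sum // (big_morph e (Fp_charD p_prime) (@Fp_char0 R p)).
rewrite -[m in phi_scale ^+ m]card_ord -prodr_const -big_split /=.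
by apply: eq_bigr => i _; rewrite ffunE /phi Ccs.
Qed.

Lemma sumket_comb_ffunE (a : 'rV[F]_n -> R[i]) cs :
  (\sum_(c in C) a c *: S c) cs =
  if [forall i, cs i \in C] then a (\sum_(i < m) cs i) else 0.
Proof.
rewrite sum_ffunE; under eq_bigr => c _ do rewrite 2!ffunE -[_ *: _]/(_ * _).
case: (boolP [forall i, cs i \in C]) => [/forallP Ccs | _]; last first.
  by rewrite big1 // => c _; rewrite andFb mulr0.
rewrite (eq_bigr (fun c => if c == \sum_(i < m) cs i then a c else 0)); last first.
  by move=> c _; rewrite andTb eq_sym; case: eqP; rewrite ?mulr1 ?mulr0.
rewrite -big_mkcondr (big_pred1 (\sum_(i < m) cs i)) // => c /=.
have C_sum : \sum_(i < m) cs i \in C by apply: memv_suml => i _; apply: Ccs.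
by case: eqP => [->|_]; rewrite ?andbT ?andbF.
Qed.

Lemma Phi_diagE l : Phi_diag l = phi_scale ^+ m *: \sum_(c in C) e (kappa l c) *: S c.
Proof.
apply/ffunP => cs; rewrite Phi_diag_ffunE [RHS]ffunE sumket_comb_ffunE -[_ *: _]/(_ * _).
by case: ifP; rewrite ?mulr0.
Qed.

Lemma sumket_inversion c : c \in C ->
  \sum_(l : K) e (- kappa l c) *: Phi_diag l = (#|K|%:R * phi_scale ^+ m) *: S c.
Proof.
move=> Cc.
have coef d : d \in C ->
    \sum_(l : K) e (- kappa l c) *: (e (kappa l d) *: S d) =
    (if d == c then #|K|%:R *: S c else 0).
  move=> Cd; under eq_bigr => l _ do rewrite scalerA.
  rewrite -scaler_suml.
  under eq_bigr => l _ do rewrite -(Fp_charD p_prime) addrC -kappaB //.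
  rewrite sum_char_kappa ?memvB // kappa_separates ?memvB //.
  by rewrite subr_eq0; case: eqP => [->|_]; rewrite ?scale0r.
under eq_bigr => l _ do rewrite Phi_diagE scalerA mulrC -scalerA scaler_sumr.
rewrite -scaler_sumr exchange_big /= (eq_bigr _ coef) -big_mkcondr /=.
rewrite (big_pred1 c) => [|d]; first by rewrite scalerA mulrC.
by rewrite /= andbC; case: eqP => // ->.
Qed.

Lemma Phi_diag_in_span_sumket l :
  Phi_diag l \in <<[seq S c | c <- code_elems C]>>%VS.
Proof.
rewrite Phi_diagE; apply/memvZ/memv_suml => c Cc; apply/memvZ/memv_span.
by apply: map_f; rewrite mem_code_elems.
Qed.

Lemma sumket_in_span_Phi_diag c : c \in C ->
  S c \in <<[seq @Phi R p F n m C K kappa Lam | Lam <- enum (diagD K m)]>>%VS.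
Proof.
move=> Cc; have scale_neq0 : #|K|%:R * phi_scale ^+ m != 0.
  rewrite mulf_neq0 ?expf_neq0 ?phi_scale_neq0 // pnatr_eq0 card_K -lt0n.
  by apply/card_gt0P; exists 0; apply: mem0v.
rewrite -[S c]scale1r -(mulVf scale_neq0) -scalerA -sumket_inversion //.
apply/memvZ/memv_suml => l _; apply/memvZ/memv_span.
by apply: map_f; rewrite mem_enum; apply/imsetP; exists l.
Qed.

End CodeStates.

Theorem proposition3p6 (R : realType) (p r : nat) (F : finFieldType)
    (n k m : nat) (C : {vspace 'rV[F]_n}) (K : finFieldType)
    (kappa : K -> 'rV[F]_n -> 'F_p) :
  prime p -> #|F| = (p ^ r)%N ->
  \dim C = k -> (1 <= k)%N -> (k < n)%N -> (2 <= m)%N ->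
  #|K| = ((p ^ r) ^ k)%N ->
  Fp_iso_to_dual C kappa ->
  (<<[seq @Phi R p F n m C K kappa Lam | Lam <- enum (diagD K m)]>>%VS
     : {vspace ket_space R F n m})
  = <<[seq @sumket R F n m C c | c <- code_elems C]>>%VS.
Proof.
move=> p_prime card_F dim_C _ _ _ card_K' kappa_iso.
have card_K : #|K| = #|C| by rewrite card_vspace card_K' card_F dim_C.
apply/eqP; rewrite eqEsubv; apply/andP; split; apply/span_subvP => _ /mapP[x + ->].
- by rewrite mem_enum => /imsetP[l _ ->]; apply: Phi_diag_in_span_sumket.
- by rewrite mem_code_elems; apply: sumket_in_span_Phi_diag.
Qed.
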